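(* Let $G$ be a finite graph, $k$ a positive integer, $uv\in E(G)$, and $c$ a $k$-colouring of $G$ such that some colour $i\in\{1,\dots,k\}$ does not appear under $c$ on the closed neighbourhood of $u$ nor on the closed neighbourhood of $v$. Then there exist a $k$-colouring $c_u$ differing from $c$ exactly at $u$ and a $k$-colouring $c_v$ differing from $c$ exactly at $v$ such that $c_u$ and $c_v$ have no common neighbour in $\mathcal{C}_k(G)$ other than $c$.
   Context: A $k$-colouring of $G$ is a map $c:V(G)\to\{1,\dots,k\}$ with $c(x)\neq c(y)$ for every edge $xy$. The $k$-recolouring graph $\mathcal{C}_k(G)$ has as vertices all $k$-colourings of $G$, two colourings being adjacent iff they differ at exactly one vertex of $G$. *)

From mathcomp Require Import all_boot.
Set Implicit Arguments. Unset Strict Implicit. Unset Printing Implicit Defensive.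

(* A finite simple graph: vertex type T : finType with a symmetric,
   irreflexive adjacency relation e. Colours {1..k} are represented by 'I_k. *)
Definition simple_graph (T : finType) (e : rel T) : Prop :=
  symmetric e /\ irreflexive e.

Definition is_colouring (T : finType) (e : rel T) (k : nat) (c : T -> 'I_k) : Prop :=
  forall x y, e x y -> c x != c y.

Definition differ_exactly_at (T : finType) (k : nat) (c d : {ffun T -> 'I_k}) (x : T) : Prop :=
  c x != d x /\ forall y, y != x -> c y = d y.

Definition recol_adj (T : finType) (k : nat) (c d : {ffun T -> 'I_k}) : Prop :=
  exists x, differ_exactly_at c d x.

Definition closed_nbhd (T : finType) (e : rel T) (x : T) : pred T :=
  fun y => (y == x) || e x y.

From mathcomp Require Import all_boot.

Set Implicit Arguments.
Unset Strict Implicit.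
Unset Printing Implicit Defensive.

(* Recolour u and v to the free colour i to get c_u and c_v.  These differ at
   exactly the two vertices u and v, so a common neighbour d of both in the
   recolouring graph must change c_u at one of them and c_v at the other: either
   d keeps the original colours at u and v, i.e. d = c, or d gives both u and v
   the colour i, which is improper since uv is an edge. *)

Section Recolour.

Variables (T : finType) (k : nat).
Implicit Types (c d f g : {ffun T -> 'I_k}) (e : rel T).

Definition recolour c (x : T) (i : 'I_k) : {ffun T -> 'I_k} :=
  [ffun w => if w == x then i else c w].

Lemma mem_closed_nbhd e x w : (w \in closed_nbhd e x) = (w == x) || e x w.
Proof. by []. Qed.

Lemma recolour_colouring e c x i :
  simple_graph e -> is_colouring e c -> (forall w, e x w -> c w != i) ->
  is_colouring e (recolour c x i).
Proof.
move=> [esym eirr] cc iNx a b eab; rewrite !ffunE.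
have [ax|ax] := eqVneq a x; have [bx|bx] := eqVneq b x.
- by move: eab; rewrite ax bx eirr.
- by rewrite eq_sym iNx // -ax.
- by rewrite iNx // -bx esym.
- exact: cc.
Qed.

Lemma differ_exactly_at_recolour c x i :
  c x != i -> differ_exactly_at (recolour c x i) c x.
Proof.
move=> cxi; split=> [|y /negbTE yx]; first by rewrite ffunE eqxx eq_sym.
by rewrite ffunE yx.
Qed.

Lemma differ_exactly_at_common_site d f g x y w :
  differ_exactly_at d f x -> differ_exactly_at d g y -> f w != g w ->
  (x == w) || (y == w).
Proof.
move=> [_ dfx] [_ dgy]; apply: contraR; rewrite negb_or => /andP[xw yw].
by rewrite -dfx 1?eq_sym // dgy 1?eq_sym.
Qed.

Lemma differ_exactly_at_common_sites d f g x y u v :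
  u != v -> f u != g u -> f v != g v ->
  differ_exactly_at d f x -> differ_exactly_at d g y ->
  (x = u /\ y = v) \/ (x = v /\ y = u).
Proof.
move=> uv neq_at_u neq_at_v dfx dgy.
have /orP[/eqP xu|/eqP yu] := differ_exactly_at_common_site dfx dgy neq_at_u;
have /orP[/eqP xv|/eqP yv] := differ_exactly_at_common_site dfx dgy neq_at_v.
- by move: uv; rewrite -xu -xv eqxx.
- by left.
- by right.
- by move: uv; rewrite -yu -yv eqxx.
Qed.

End Recolour.

Theorem lemma2p3 (T : finType) (e : rel T) (k : nat) (u v : T)
    (c : {ffun T -> 'I_k}) :
  simple_graph e -> 0 < k -> e u v -> is_colouring e c ->
  (exists i : 'I_k, forall w, (w \in closed_nbhd e u) || (w \in closed_nbhd e v) -> c w != i) ->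
  exists cu cv : {ffun T -> 'I_k},
    [/\ is_colouring e cu, differ_exactly_at cu c u,
        is_colouring e cv, differ_exactly_at cv c v &
        forall d : {ffun T -> 'I_k}, is_colouring e d ->
          recol_adj d cu -> recol_adj d cv -> d = c].
Proof.
move=> simple_e _ euv cc [i iN].
have uv : u != v by apply: contraTneq euv => ->; rewrite simple_e.2.
have iNu w : e u w -> c w != i by move=> euw; rewrite iN // mem_closed_nbhd euw orbT.
have iNv w : e v w -> c w != i by move=> evw; rewrite iN // !mem_closed_nbhd evw !orbT.
have cui : c u != i by rewrite iN // mem_closed_nbhd eqxx.
have cvi : c v != i by rewrite iN // !mem_closed_nbhd eqxx orbT.
exists (recolour c u i), (recolour c v i); split;
  do ?[exact: recolour_colouring | exact: differ_exactly_at_recolour].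
move=> d dC [x dx] [y dy].
have vu : v != u by rewrite eq_sym.
have [neq_at_u neq_at_v] : recolour c u i u != recolour c v i u /\
                 recolour c u i v != recolour c v i v.
  by rewrite !ffunE !eqxx (negbTE uv) (negbTE vu) eq_sym.
have [[xu yv]|[xv yu]] := differ_exactly_at_common_sites uv neq_at_u neq_at_v dx dy; subst x y.
- apply/ffunP => w; have [->|wu] := eqVneq w u.
    by rewrite dy.2 // ffunE (negbTE uv).
  by rewrite dx.2 // ffunE (negbTE wu).
- have := dC u v euv.
  by rewrite dx.2 // dy.2 // !ffunE !eqxx.
Qed.
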